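(* Under the standing setup with $\gamma>0$ and $s_1=\dots=s_n=1$ (so Hank's strategy set is $\{1\}$ and Georgia's is $[0,1]$), define $\hat m(1,1)=\chi\gamma+\beta-\beta\lambda-\lambda\gamma$, $\hat m(0,1)=\beta-\lambda\beta+(\lambda+\gamma+\chi-2)\gamma$ and $\hat w(1)=\frac{\lambda+\gamma-1+\sqrt{1-\beta+(\lambda+\gamma+\beta-2)\lambda-\chi\gamma}}{\gamma}$. Then the Nash equilibrium of the zero-sum game (Georgia minimizing $f$, Hank maximizing $f$) is $(0,1)$ if $\hat m(0,1)\ge0$; $(1,1)$ if $\hat m(1,1)\le0$; and $(\hat w(1),1)$ otherwise.
   Context: Standing setup. Fix $n\in\mathbb N$ and $W=[w_{ij}]\in\mathbb R^{n\times n}$ with $w_{ij}\ge0$, $w_{ii}=0$. Let $\|W\|_\infty=\max_i\sum_j|w_{ij}|$, $\|W\|_1=\max_j\sum_i|w_{ij}|$, let $\lambda$ be the spectral radius of $W$, and assume there is $c\in\mathbb R^n$ with all entries positive and $W^\top c=\lambda c$. Fix $\beta\ge\gamma\ge0$ with $1-\max\{\|W\|_\infty,\|W\|_1\}>\max\{2\beta,4\gamma\}$. Fix innate opinions $s\in[0,1]^n$, $\overline s=\max_is_i$, $\underline s=\min_is_i$; Georgia chooses $g\in[0,\underline s]$, Hank chooses $h\in[\overline s,1]$. Set $\widehat c_i=c_i/\sum_jc_j$, $\widehat s=\sum_i\widehat c_is_i$, $\chi=\sum_i\widehat c_is_i\sum_jw_{ij}$. Define $$f(g,h)=\frac{(1-2\beta+(h-g)\gamma)\widehat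 s-\chi+(h+g)\beta+(g^2-h^2)\gamma}{1-\lambda+(g-h)\gamma}\,c^\top\mathbf 1$$ (the centrality-weighted steady state of the opinion dynamics with source opinions $g,h$). *)

From HB Require Import structures.
From mathcomp Require Import all_boot all_order all_algebra.
Set Implicit Arguments. Unset Strict Implicit. Unset Printing Implicit Defensive.
Import Order.TTheory GRing.Theory Num.Theory.
Local Open Scope ring_scope.

Section Defs.
Variables (R : rcfType) (n : nat).

Definition norm_inf (W : 'M[R]_n) : R :=
  \big[Num.max/0]_(i < n) \sum_(j < n) `|W i j|.
Definition norm_1 (W : 'M[R]_n) : R :=
  \big[Num.max/0]_(j < n) \sum_(i < n) `|W i j|.

(* a + i b is a (complex) eigenvalue of the real matrix W, with eigenvector
   u + i v (u, v real, not both zero):  W (u + i v) = (a + i b)(u + i v). *)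
Definition complex_eigenvalue (W : 'M[R]_n) (a b : R) : Prop :=
  exists (u v : 'cV[R]_n), (u != 0 \/ v != 0) /\
    W *m u = a *: u - b *: v /\ W *m v = b *: u + a *: v.

Definition is_spectral_radius (W : 'M[R]_n) (lam : R) : Prop :=
  (exists a b, complex_eigenvalue W a b /\ lam = Num.sqrt (a ^+ 2 + b ^+ 2)) /\
  (forall a b, complex_eigenvalue W a b -> Num.sqrt (a ^+ 2 + b ^+ 2) <= lam).

Definition smax (s : 'I_n -> R) : R := \big[Num.max/0]_(i < n) s i.
Definition smin (s : 'I_n -> R) : R := \big[Num.min/1]_(i < n) s i.

Definition csum (c : 'cV[R]_n) : R := \sum_(i < n) c i 0.
Definition chat (c : 'cV[R]_n) (i : 'I_n) : R := c i 0 / csum c.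
Definition shat (c : 'cV[R]_n) (s : 'I_n -> R) : R :=
  \sum_(i < n) chat c i * s i.
Definition chi (W : 'M[R]_n) (c : 'cV[R]_n) (s : 'I_n -> R) : R :=
  \sum_(i < n) chat c i * s i * \sum_(j < n) W i j.

(* centrality-weighted steady state f(g,h); c^T 1 = csum c *)
Definition fval (W : 'M[R]_n) (c : 'cV[R]_n) (lam beta gamma : R)
  (s : 'I_n -> R) (g h : R) : R :=
  ((1 - 2 * beta + (h - g) * gamma) * shat c s - chi W c s + (h + g) * beta
     + (g ^+ 2 - h ^+ 2) * gamma)
  / (1 - lam + (g - h) * gamma) * csum c.

Definition is_nash (W : 'M[R]_n) (c : 'cV[R]_n) (lam beta gamma : R)
  (s : 'I_n -> R) (g h : R) : Prop :=
  [/\ 0 <= g <= smin s, smax s <= h <= 1,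
      (forall g', 0 <= g' <= smin s ->
         fval W c lam beta gamma s g h <= fval W c lam beta gamma s g' h) &
      (forall h', smax s <= h' <= 1 ->
         fval W c lam beta gamma s g h' <= fval W c lam beta gamma s g h)].

End Defs.

From HB Require Import structures.
From mathcomp Require Import all_boot all_order all_algebra.
From mathcomp Require Import ring lra.
Import Order.TTheory GRing.Theory Num.Theory.
Local Open Scope ring_scope.

(* When every innate opinion equals 1, Hank is forced to play
   h = 1, the weighted innate opinion is shat = 1, and the eigen-relation
   W^T c = lam c turns chi into lam.  Hence f(g, 1) = phi(g) * c^T 1, where
     phi(g) = (1 - beta - lam + (beta - gamma) g + gamma g^2)
              / (1 - lam + (g - 1) gamma)
   is a quotient of a quadratic by a positive affine function.  The identity
     phi(g) - phi(t) = (gamma (g-t)^2 den(t) + slope(t) (g-t)) / (den(g) den(t))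
   (slope = numerator of phi') shows that any t with slope(t) (g - t) >= 0 is
   a strict minimiser of phi.  On [0,1] we have slope(1) = beta (1-lam) > 0,
   so the minimiser is 0 when slope(0) = m(0,1) >= 0 and otherwise the root
   w(1) of slope inside (0,1); since m(1,1) = slope(1) > 0 the middle case
   never occurs.  All of this only needs 0 < gamma <= beta < 1 - lam, which
   follows from the norm hypothesis because lam <= ||W||_inf. *)

Section ReducedObjective.
Context {R : rcfType} (lam beta gamma : R).

(* Denominator and numerator of f(g, 1) / c^T 1 when all opinions are 1. *)
Definition steady_den (g : R) : R := 1 - lam + (g - 1) * gamma.
Definition steady_num (g : R) : R :=
  1 - beta - lam + g * (beta - gamma) + g ^+ 2 * gamma.
Definition phi (g : R) : R := steady_num g / steady_den g.

(* Numerator of the derivative of phi: phi'(t) = slope t / steady_den t ^ 2. *)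
Definition slope (t : R) : R :=
  gamma ^+ 2 * t ^+ 2 + 2 * (1 - lam - gamma) * gamma * t
  + (beta - gamma) * (1 - lam - gamma) - gamma * (1 - beta - lam).

Lemma phi_sub (g t : R) : steady_den g != 0 -> steady_den t != 0 ->
  phi g - phi t =
  (gamma * (g - t) ^+ 2 * steady_den t + slope t * (g - t))
  / (steady_den g * steady_den t).
Proof.
rewrite /phi /slope /steady_num /steady_den => dg dt.
by field; rewrite dg dt.
Qed.

Lemma steady_den_gt0 (g : R) : 0 <= gamma -> gamma < 1 - lam -> 0 <= g ->
  0 < steady_den g.
Proof.
move=> gamma_ge0 gamma_lt g_ge0; have : 0 <= g * gamma by rewrite mulr_ge0.
rewrite /steady_den; lra.
Qed.

Lemma phi_lt_of_slope (t g : R) : 0 < gamma -> gamma < 1 - lam ->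
  0 <= t -> 0 <= g -> g != t -> 0 <= slope t * (g - t) -> phi t < phi g.
Proof.
move=> gamma_gt0 gamma_lt t_ge0 g_ge0 g_neq_t slope_ok.
have den_t := steady_den_gt0 t (ltW gamma_gt0) gamma_lt t_ge0.
have den_g := steady_den_gt0 g (ltW gamma_gt0) gamma_lt g_ge0.
have sq_gt0 : 0 < (g - t) ^+ 2 by rewrite exprn_even_gt0 // subr_eq0.
rewrite -subr_gt0 phi_sub ?gt_eqF //.
apply: divr_gt0; last exact: mulr_gt0.
by apply: ltr_wpDr => //; do 2!apply: mulr_gt0 => //.
Qed.

Lemma slope1 : slope 1 = beta * (1 - lam).
Proof. by rewrite /slope; ring. Qed.

(* The larger root of slope, i.e. the interior critical point w(1). *)
Definition slope_disc : R :=
  1 - beta + (lam + gamma + beta - 2) * lam - lam * gamma.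
Definition slope_root : R := (lam + gamma - 1 + Num.sqrt slope_disc) / gamma.

Lemma slope_disc_factor : slope_disc = (1 - lam) * (1 - lam - beta).
Proof. by rewrite /slope_disc; ring. Qed.

Lemma slope_disc_lo : (1 - lam - gamma) ^+ 2 - slope_disc = slope 0.
Proof. by rewrite /slope_disc /slope; ring. Qed.

Lemma slope_disc_hi : (1 - lam) ^+ 2 - slope_disc = slope 1.
Proof. by rewrite slope_disc_factor slope1; ring. Qed.

Lemma slope_scaled (t : R) :
  slope t = (t * gamma) ^+ 2 + 2 * (1 - lam - gamma) * (t * gamma) + slope 0.
Proof. by rewrite /slope; ring. Qed.

Lemma slope_root_eq0 : 0 < gamma -> 0 <= slope_disc -> slope slope_root = 0.
Proof.
move=> gamma_gt0 disc_ge0.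
rewrite slope_scaled /slope_root divfK ?gt_eqF // -slope_disc_lo.
set S := Num.sqrt slope_disc.
have S2 : S ^+ 2 = slope_disc by rewrite sqr_sqrtr.
by rewrite -S2; ring.
Qed.

Lemma slope_root_in01 : 0 < gamma -> gamma <= beta -> beta < 1 - lam ->
  slope 0 < 0 -> 0 < slope_root < 1.
Proof.
move=> gamma_gt0 gamma_le_beta beta_lt slope0_lt0.
have lam_lt1 : 0 < 1 - lam by lra.
have slope1_gt0 : 0 < slope 1 by rewrite slope1 mulr_gt0 //; lra.
have disc_ge0 : 0 <= slope_disc by rewrite slope_disc_factor mulr_ge0 //; lra.
set S := Num.sqrt slope_disc.
have S2 : S ^+ 2 = slope_disc by rewrite sqr_sqrtr.
have S_ge0 : 0 <= S by rewrite sqrtr_ge0.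
have S_lo : 1 - lam - gamma < S.
  rewrite -(ltr_pXn2r (n := 2)) ?nnegrE //; last lra.
  by move: slope0_lt0; rewrite S2 -slope_disc_lo; lra.
have S_hi : S < 1 - lam.
  rewrite -(ltr_pXn2r (n := 2)) ?nnegrE //; last lra.
  by move: slope1_gt0; rewrite S2 -slope_disc_hi; lra.
rewrite /slope_root -/S ltr_pdivrMr // ltr_pdivlMr // mul0r mul1r.
by apply/andP; split; lra.
Qed.

Definition phi_argmin : R := if 0 <= slope 0 then 0 else slope_root.

Lemma phi_argmin_spec : 0 < gamma -> gamma <= beta -> beta < 1 - lam ->
  0 <= phi_argmin <= 1 /\
  forall g, 0 <= g <= 1 -> g != phi_argmin -> phi phi_argmin < phi g.
Proof.
move=> gamma_gt0 gamma_le_beta beta_lt.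
have gamma_lt : gamma < 1 - lam by lra.
rewrite /phi_argmin; case: ifPn => [slope0_ge0 | ].
  split; first by rewrite lexx ler01.
  move=> g /andP[g_ge0 _] g_neq0; apply: phi_lt_of_slope => //.
  by rewrite subr0 mulr_ge0.
rewrite -ltNge => slope0_lt0.
have /andP[root_gt0 root_lt1] :=
  slope_root_in01 gamma_gt0 gamma_le_beta beta_lt slope0_lt0.
have disc_ge0 : 0 <= slope_disc.
  by rewrite slope_disc_factor mulr_ge0 //; lra.
split; first by rewrite !ltW.
move=> g /andP[g_ge0 _] g_neq; apply: phi_lt_of_slope => //; first exact: ltW.
by rewrite slope_root_eq0 // mul0r.
Qed.
End ReducedObjective.

Section Network.
Context {R : rcfType} {n : nat} {W : 'M[R]_n} {c : 'cV[R]_n} {lam : R}.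
Hypotheses (c_gt0 : forall i, 0 < c i 0) (c_eig : W^T *m c = lam *: c).

(* A spectral radius is the modulus of an eigenvalue, so n cannot be 0. *)
Lemma spectral_radius_dim : is_spectral_radius W lam -> (0 < n)%N.
Proof.
case: n W => [|//] W0 [[a [b [[u [v [uv_neq0 _]]] _]]] _].
by case: uv_neq0; rewrite flatmx0 eqxx.
Qed.

(* c is a left eigenvector: the c-weighted row sums of W add up to lam c^T 1. *)
Lemma weighted_rowsums : \sum_i c i 0 * \sum_j W i j = lam * csum c.
Proof.
transitivity (\sum_j (W^T *m c) j 0).
  under eq_bigr do rewrite mulr_sumr.
  rewrite exchange_big; apply: eq_bigr => j _; rewrite mxE.
  by apply: eq_bigr => i _; rewrite mxE mulrC.
by rewrite c_eig /csum mulr_sumr; apply: eq_bigr => j _; rewrite mxE.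
Qed.

Lemma csum_gt0 (i0 : 'I_n) : 0 < csum c.
Proof.
rewrite /csum (bigD1 i0) //=; apply: ltr_pwDl; first exact: c_gt0.
by apply: sumr_ge0 => i _; apply: ltW.
Qed.

(* lam is a c-weighted average of row sums, hence at most the largest one. *)
Lemma lam_le_norm_inf (i0 : 'I_n) : lam <= norm_inf W.
Proof.
rewrite -(ler_pM2r (csum_gt0 i0)) -weighted_rowsums /csum mulr_sumr.
apply: ler_sum => i _; rewrite mulrC; apply: ler_wpM2r; first exact: ltW.
apply: le_trans (le_bigmax _ (fun i => \sum_j `|W i j|) i).
by apply: ler_sum => j _; exact: ler_norm.
Qed.

Context {s : 'I_n -> R}.
Hypothesis s_ones : forall i, s i = 1.

Lemma smin_ones : smin s = 1.
Proof.
apply: (big_ind (fun x => x = 1)) => [// | x y x1 y1 | i _]; last exact: s_ones.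
by rewrite x1 y1 minxx.
Qed.

Lemma smax_ones (i0 : 'I_n) : smax s = 1.
Proof.
apply/le_anti/andP; split; first by apply: bigmax_le => // i _; rewrite s_ones.
by rewrite /smax -(s_ones i0) (le_bigmax _ s i0).
Qed.

(* chat is a probability vector, so constant opinions average to 1 ... *)
Lemma shat_ones (i0 : 'I_n) : shat c s = 1.
Proof.
rewrite /shat /chat; under eq_bigr do rewrite s_ones mulr1.
by rewrite -mulr_suml divff // gt_eqF // (csum_gt0 i0).
Qed.

(* ... and chi becomes the chat-weighted row sum, which is lam. *)
Lemma chi_ones (i0 : 'I_n) : chi W c s = lam.
Proof.
rewrite /chi /chat; under eq_bigr do rewrite s_ones mulr1 mulrAC.
by rewrite -mulr_suml weighted_rowsums mulfK // gt_eqF // (csum_gt0 i0).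
Qed.

Lemma fval_ones (i0 : 'I_n) (beta gamma g : R) :
  fval W c lam beta gamma s g 1 = phi lam beta gamma g * csum c.
Proof.
rewrite /fval shat_ones // chi_ones // /phi /steady_num /steady_den.
by congr (_ / _ * _); ring.
Qed.

End Network.

(* With s = 1 Hank has the single strategy 1, so an equilibrium is exactly
   a minimiser of g |-> f(g,1) on [0,1] paired with h = 1. *)
Lemma nash_ones_iff (R : rcfType) (n : nat) (W : 'M[R]_n) (c : 'cV[R]_n)
  (lam beta gamma t : R) (s : 'I_n -> R) (i0 : 'I_n) :
  (forall i, s i = 1) -> (forall i, 0 < c i 0) -> W^T *m c = lam *: c ->
  0 <= t <= 1 ->
  (forall g, 0 <= g <= 1 -> g != t -> phi lam beta gamma t < phi lam beta gamma g) ->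
  forall g h, is_nash W c lam beta gamma s g h <-> (g, h) = (t, 1).
Proof.
move=> s1 c_gt0 c_eig t01 t_min g h.
have C_gt0 := csum_gt0 c_gt0 i0.
have fE := fval_ones c_gt0 c_eig s1 i0 beta gamma.
rewrite /is_nash smin_ones // smax_ones //; split.
  case=> /andP[g_ge0 g_le1] /andP[h_ge1 h_le1] g_best _.
  have h_eq1 : h = 1 by apply/le_anti/andP.
  rewrite h_eq1 in g_best *; congr (_, _); apply/eqP/negPn/negP => g_neq_t.
  have := g_best t t01; rewrite !fE ler_pM2r // leNgt.
  by rewrite t_min // g_ge0.
case=> -> ->; split; rewrite ?lexx //.
- move=> g' g'01; rewrite !fE ler_pM2r //.
  by have [-> | g'_neq] := eqVneq g' t; [exact: lexx | exact/ltW/t_min].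
- move=> h' /andP[h'_ge1 h'_le1].
  by have -> : h' = 1 by apply/le_anti/andP.
Qed.

Theorem corollary5 (R : rcfType) (n : nat) (W : 'M[R]_n) (lam : R)
  (c : 'cV[R]_n) (beta gamma : R) (s : 'I_n -> R)
  (hW_nonneg : forall i j, 0 <= W i j)
  (hW_diag : forall i, W i i = 0)
  (hlam : is_spectral_radius W lam)
  (hc_pos : forall i, 0 < c i 0)
  (hc_eig : W^T *m c = lam *: c)
  (hbg : gamma <= beta) (hgamma : 0 < gamma)
  (hnorm : Num.max (2 * beta) (4 * gamma) < 1 - Num.max (norm_inf W) (norm_1 W))
  (hs : forall i, s i = 1) :
  let x := chi W c s in
  let m11 := x * gamma + beta - beta * lam - lam * gamma in
  let m01 := beta - lam * beta + (lam + gamma + x - 2) * gamma in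
  let w1 := (lam + gamma - 1
             + Num.sqrt (1 - beta + (lam + gamma + beta - 2) * lam - x * gamma))
            / gamma in
  forall g h : R,
    is_nash W c lam beta gamma s g h <->
    (g, h) = (if 0 <= m01 then 0 else if m11 <= 0 then 1 else w1, 1).
Proof.
have i0 : 'I_n := Ordinal (spectral_radius_dim hlam).
move=> x m11 m01 w1; rewrite {}/w1 {}/m11 {}/m01 {}/x (chi_ones hc_pos hc_eig hs i0).
have lam_le := lam_le_norm_inf hc_pos hc_eig i0.
have beta_small : 2 * beta < 1 - lam.
  move: hnorm; rewrite gt_max => /andP[beta_hyp _]; apply: lt_le_trans beta_hyp _.
  by rewrite lerD2l lerN2 le_max lam_le.
have beta_lt : beta < 1 - lam by lra.
have m11_gt0 : 0 < lam * gamma + beta - beta * lam - lam * gamma.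
  rewrite (_ : _ + _ - _ - _ = beta * (1 - lam)); last by ring.
  by apply: mulr_gt0; lra.
have -> : beta - lam * beta + (lam + gamma + lam - 2) * gamma = slope lam beta gamma 0.
  by rewrite /slope; ring.
rewrite [_ <= 0]leNgt m11_gt0 /=.
have [t01 t_min] := phi_argmin_spec lam beta gamma hgamma hbg beta_lt.
exact: nash_ones_iff.
Qed.
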